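(* Let $(X,d,\kappa)$ be a digital metric space where $d$ is an $\ell_p$ metric for some $1\le p\le\infty$. Suppose $T:X\to X$ satisfies $d(T(x),T(y))\le\psi(d(x,y))$ for all $x,y\in X$, where $\psi:[0,\infty)\to[0,\infty)$ is monotone nondecreasing and satisfies $\lim_{n\to\infty}\psi^n(t)=0$ for all $t>0$ ($\psi^n$ the $n$-fold composition). Then $T$ has a unique fixed point.
   Context: A digital metric space is a triple $(X,d,\kappa)$ where $X\subset\mathbb{Z}^n$ for some positive integer $n$, $\kappa$ is an adjacency relation on $X$, and $d$ is a metric on $X$. The $\ell_p$ metric on $\mathbb{Z}^n$ is $d(x,y)=(\sum_i|x_i-y_i|^p)^{1/p}$ for $1\le p<\infty$ and $\max_i|x_i-y_i|$ for $p=\infty$. *)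

From HB Require Import structures.
From mathcomp Require Import all_boot all_order all_algebra.
From mathcomp Require Import all_classical all_reals all_analysis.
Set Implicit Arguments. Unset Strict Implicit. Unset Printing Implicit Defensive.
Import Order.TTheory GRing.Theory Num.Theory.
Local Open Scope ring_scope.

(* Points of Z^n are integer row vectors 'rV[int]_n; coordinate i of x is x 0 i. *)

(* The l_p metric on Z^n, for an exponent p in the extended reals:
   p = r%:E (finite, meaningful for 1 <= r):  (sum_i |x_i - y_i|^r)^(1/r)
   p = +oo : max_i |x_i - y_i|
   p = -oo : not an admissible exponent (excluded by the hypothesis 1 <= p);
             we set the value to 0 there. *)
Definition lp_dist (R : realType) (n : nat) (p : \bar R)
  (x y : 'rV[int]_n) : R :=
  match p with
  | EFin r => powR (\sum_(i < n) powR (`|x 0 i - y 0 i|%:~R) r) r^-1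
  | +oo%E => \big[Num.max/0]_(i < n) (`|x 0 i - y 0 i|%:~R)
  | -oo%E => 0
  end.

From HB Require Import structures.
From mathcomp Require Import all_boot all_order all_algebra.
From mathcomp Require Import all_classical all_reals all_analysis.
Set Implicit Arguments. Unset Strict Implicit.
Import Order.TTheory GRing.Theory Num.Theory.
Local Open Scope classical_set_scope.
Local Open Scope ring_scope.

(* Distinct points of Z^n are at l_p distance at least 1, while the iterates
   psi^k t eventually drop below 1.  Since d (T^k x) (T^k y) <= psi^k (d x y),
   any two orbits of T eventually meet; applied to x and T x this gives a
   fixed point, applied to two fixed points it shows they coincide. *)

Section UniformlyDiscreteContraction.
Variables (R : realType) (A : eqType) (d : A -> A -> R) (delta : R).
Variables (X : set A) (T : A -> A) (psi : R -> R).
Hypothesis d_ge0 : forall x y, 0 <= d x y.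
Hypothesis delta_gt0 : 0 < delta.
Hypothesis d_sep : forall x y, x != y -> delta <= d x y.
Hypothesis XT : forall x, X x -> X (T x).
Hypothesis psi_mono : forall s t, 0 <= s -> s <= t -> psi s <= psi t.
Hypothesis psi_iter_cvg0 :
  forall t, 0 < t -> (fun k : nat => iter k psi t) @ \oo --> 0.
Hypothesis T_contr :
  forall x y, X x -> X y -> d (T x) (T y) <= psi (d x y).

Lemma iter_stable k x : X x -> X (iter k T x).
Proof. by move=> Xx; elim: k => //= k; apply: XT. Qed.

Lemma dist_iter_le k x y :
  X x -> X y -> d (iter k T x) (iter k T y) <= iter k psi (d x y).
Proof.
move=> Xx Xy; elim: k => //= k IH.
apply: le_trans (T_contr (iter_stable k Xx) (iter_stable k Xy)) _.
exact: psi_mono (d_ge0 _ _) IH.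
Qed.

Lemma iter_psi_lt t : 0 < t -> exists k, iter k psi t < delta.
Proof.
move=> t_gt0; have [N _ HN] := cvgr_lt _ (psi_iter_cvg0 t_gt0) _ delta_gt0.
by exists N; apply: HN => /=.
Qed.

Lemma orbits_meet x y : X x -> X y -> exists k, iter k T x = iter k T y.
Proof.
move=> Xx Xy; have [->|nxy] := eqVneq x y; first by exists 0%N.
have [k hk] := iter_psi_lt (lt_le_trans delta_gt0 (d_sep nxy)).
exists k; apply/eqP; apply: contraT => /d_sep.
by rewrite leNgt (le_lt_trans (dist_iter_le k Xx Xy) hk).
Qed.

Lemma fixed_point_exists : X !=set0 -> exists x, X x /\ T x = x.
Proof.
move=> [x Xx]; have [k hk] := orbits_meet Xx (XT Xx).
by exists (iter k T x); split; [exact: iter_stable | rewrite {2}hk -iterSr iterS].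
Qed.

Lemma fixed_point_unique x y : X x -> X y -> T x = x -> T y = y -> y = x.
Proof.
move=> Xx Xy Tx Ty; have [k] := orbits_meet Xy Xx.
by rewrite !iter_fix.
Qed.

End UniformlyDiscreteContraction.

Lemma powR_ge1 (R : realType) (a r : R) : 1 <= a -> 0 <= r -> 1 <= a `^ r.
Proof. by move=> a_ge1 r_ge0; rewrite -(powRr0 a) ler_powR. Qed.

Lemma lp_dist_ge0 (R : realType) (n : nat) (p : \bar R) (x y : 'rV[int]_n) :
  0 <= lp_dist p x y.
Proof.
case: p => [r| |] //=; first exact: powR_ge0.
exact: bigmax_ge_id.
Qed.

Lemma lp_dist_ge1 (R : realType) (n : nat) (p : \bar R) (x y : 'rV[int]_n) :
  (0%:E <= p)%E -> x != y -> 1 <= lp_dist p x y.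
Proof.
move=> p_ge0 nxy.
have [i xy_i] : exists i, x 0 i != y 0 i.
  apply/existsP; apply: contraNT nxy => /existsPn xy_eq; apply/eqP/rowP => j.
  by apply/eqP; have := xy_eq j; rewrite negbK.
have dist_i_ge1 : 1 <= (`|x 0 i - y 0 i|%:~R : R).
  by rewrite ler1z -gtz0_ge1 normr_gt0 subr_eq0.
case: p p_ge0 => [r| |] //= => [|_]; last exact: le_trans dist_i_ge1 (le_bigmax _ _ _).
rewrite lee_fin => r_ge0.
have sum_ge1 : 1 <= \sum_(j < n) powR (`|x 0 j - y 0 j|%:~R) r.
  rewrite (bigD1 i) //=; apply: le_trans (powR_ge1 dist_i_ge1 r_ge0) _.
  by rewrite lerDl sumr_ge0 // => j _; exact: powR_ge0.
by apply: powR_ge1; rewrite // invr_ge0.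
Qed.

Theorem theorem8p7 (R : realType) (n : nat) (X : set 'rV[int]_n)
  (kappa : 'rV[int]_n -> 'rV[int]_n -> Prop) (p : \bar R)
  (T : 'rV[int]_n -> 'rV[int]_n) (psi : R -> R) :
  (1%:E <= p)%E ->
  X !=set0 ->
  (forall x, X x -> X (T x)) ->
  (forall t, 0 <= t -> 0 <= psi t) ->
  (forall s t, 0 <= s -> s <= t -> psi s <= psi t) ->
  (forall t, 0 < t -> (fun k : nat => iter k psi t) @ \oo --> 0) ->
  (forall x y, X x -> X y -> lp_dist p (T x) (T y) <= psi (lp_dist p x y)) ->
  exists x, [/\ X x, T x = x & forall y, X y -> T y = y -> y = x].
Proof.
move=> p_ge1 X0 XT _ psi_mono psi_cvg T_contr.
have d_sep (x y : 'rV[int]_n) : x != y -> 1 <= lp_dist p x y.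
  exact/lp_dist_ge1/(le_trans lee01 p_ge1).
have [x [Xx Tx]] := fixed_point_exists (@lp_dist_ge0 R n p) ltr01 d_sep XT
  psi_mono psi_cvg T_contr X0.
exists x; split=> // y Xy Ty.
refine (fixed_point_unique (@lp_dist_ge0 R n p) ltr01 d_sep XT
  psi_mono psi_cvg T_contr Xx Xy Tx Ty).
Qed.
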